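(* Let $\mathfrak A$ and $\mathcal A$ be Banach algebras such that $\mathcal A$ is a Banach $\mathfrak A$-bimodule with compatible actions. If $\mathcal A$ is approximately amenable (as a Banach algebra) and $\mathcal A$ is essential as a left $\mathfrak A$-module or as a right $\mathfrak A$-module, then $\mathcal A$ is $\mathfrak A$-module approximately contractible.
   Context: Compatible actions: $\alpha\cdot(ab)=(\alpha\cdot a)b$, $(ab)\cdot\alpha=a(b\cdot\alpha)$ for $a,b\in\mathcal A,\alpha\in\mathfrak A$. $\mathcal A$ is a left essential $\mathfrak A$-module if the linear span of $\{\alpha\cdot a\}$ is dense in $\mathcal A$ (right essential similarly). $\mathcal A$ is approximately amenable if for every Banach $\mathcal A$-bimodule $X$ every bounded (linear) derivation $D:\mathcal A\to X^*$ is approximately inner, i.e. $D(a)=\lim_i(a\cdot f_i-f_i\cdot a)$ in norm for some net $(f_i)$ and all $a$. A Banach $\mathcal A$-$\mathfrak A$-module is a Banach space $X$ which is a Banach $\mathcal A$-bimodule and $\mathfrak A$-bimodule with $\alpha\cdot(a\cdot x)=(\alpha\cdot a)\cdot x$, $a\cdot(\alpha\cdot x)=(a\cdot\alpha)\cdot x$, $a\cdot(x\cdot\alpha)=(a\cdot x)\cdot\alpha$ and analogous right-sided identities; commutative if $\alpha\cdot x=x\cdot\alpha$. A module derivation $D:\mathcal A\to X$ is an additive map, bounded ($\|D(a)\|\le M\|a\|$), with $D(ab)=D(a)\cdot b+a\cdot D(b)$, $D(\alpha\cdot a)=\alpha\cdot D(a)$, $D(a\cdot\alpha)=D(a)\cdot\alpha$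 (not assumed $\mathbb C$-linear). $\mathcal A$ is $\mathfrak A$-module approximately contractible if for every commutative Banach $\mathcal A$-$\mathfrak A$-module $X$, every module derivation $D:\mathcal A\to X$ is approximately inner (there is a net $(x_i)\subseteq X$ with $D(a)=\lim_i(a\cdot x_i-x_i\cdot a)$ in norm for all $a$). *)

From mathcomp Require Import all_boot all_algebra.
From mathcomp Require Import all_classical all_reals all_analysis.
From mathcomp Require Export complex.
Import numFieldNormedType.Exports.

Set Implicit Arguments.
Unset Strict Implicit.
Unset Printing Implicit Defensive.
Import GRing.Theory Num.Theory.
Local Open Scope ring_scope.

Section Defs.
Variable K : numFieldType.

Definition directed (I : Type) (le : I -> I -> Prop) : Prop :=
  (forall i, le i i) /\
  (forall i j k, le i j -> le j k -> le i k) /\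
  (exists i : I, True) /\
  (forall i j, exists k, le i k /\ le j k).

Definition bilinear_map (U V W : lmodType K) (f : U -> V -> W) : Prop :=
  (forall u1 u2 v, f (u1 + u2) v = f u1 v + f u2 v) /\
  (forall (k : K) u v, f (k *: u) v = k *: f u v) /\
  (forall u v1 v2, f u (v1 + v2) = f u v1 + f u v2) /\
  (forall (k : K) u v, f u (k *: v) = k *: f u v).

Definition bounded_bilinear (U V W : normedModType K) (f : U -> V -> W) : Prop :=
  bilinear_map f /\ exists M : K, forall u v, `|f u v| <= M * `|u| * `|v|.

Definition banach_algebra (A : completeNormedModType K) (mul : A -> A -> A) : Prop :=
  bilinear_map mul /\ associative mul /\
  (forall a b, `|mul a b| <= `|a| * `|b|).

Definition banach_bimodule (B : completeNormedModType K) (mulB : B -> B -> B)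
    (X : completeNormedModType K) (l : B -> X -> X) (r : X -> B -> X) : Prop :=
  bounded_bilinear l /\ bounded_bilinear r /\
  (forall a b x, l (mulB a b) x = l a (l b x)) /\
  (forall a b x, r x (mulB a b) = r (r x a) b) /\
  (forall a b x, l a (r x b) = r (l a x) b).

Definition dual_elt (X : normedModType K) (f : X -> K) : Prop :=
  (forall x y, f (x + y) = f x + f y) /\
  (forall (k : K) x, f (k *: x) = k * f x) /\
  (exists M : K, forall x, `|f x| <= M * `|x|).

(* A bounded linear derivation D : A -> X^*, where X^* carries the dual
   module actions (a.f)(x) = f(x.a), (f.a)(x) = f(a.x); D a is the functional
   x |-> D a x.  D(ab) = D(a).b + a.D(b) reads D(ab)(x) = D(a)(b.x) + D(b)(x.a). *)
Definition dual_derivation (A : completeNormedModType K) (mulA : A -> A -> A)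
    (X : completeNormedModType K) (l : A -> X -> X) (r : X -> A -> X)
    (D : A -> X -> K) : Prop :=
  (forall a, dual_elt (D a)) /\
  (forall a b x, D (a + b) x = D a x + D b x) /\
  (forall (k : K) a x, D (k *: a) x = k * D a x) /\
  (exists M : K, forall a x, `|D a x| <= M * `|a| * `|x|) /\
  (forall a b x, D (mulA a b) x = D a (l b x) + D b (r x a)).

(* D is approximately inner: D(a) = lim_i (a.f_i - f_i.a) in the norm of X^*,
   for some net (f_i) in X^*.  Norm convergence in X^* is written out:
   ||D a - (a.f_i - f_i.a)|| <= eps, i.e. |...(x)| <= eps ||x|| for all x. *)
Definition approx_inner_dual (A : completeNormedModType K)
    (X : completeNormedModType K) (l : A -> X -> X) (r : X -> A -> X)
    (D : A -> X -> K) : Prop :=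
  exists (I : Type) (le : I -> I -> Prop) (f : I -> X -> K),
    directed le /\ (forall i, dual_elt (f i)) /\
    forall a (eps : K), 0 < eps -> exists i0, forall i, le i0 i ->
      forall x, `|D a x - (f i (r x a) - f i (l a x))| <= eps * `|x|.

Definition approx_amenable (A : completeNormedModType K) (mulA : A -> A -> A) : Prop :=
  forall (X : completeNormedModType K) (l : A -> X -> X) (r : X -> A -> X),
    banach_bimodule mulA l r ->
    forall D : A -> X -> K, dual_derivation mulA l r D -> approx_inner_dual l r D.

(* compatible actions of U (= frak A) on A *)
Definition compatible_actions (U A : completeNormedModType K)
    (mulA : A -> A -> A) (la : U -> A -> A) (ra : A -> U -> A) : Prop :=
  (forall al a b, la al (mulA a b) = mulA (la al a) b) /\
  (forall al a b, ra (mulA a b) al = mulA a (ra b al)).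

Definition left_essential (U A : completeNormedModType K) (la : U -> A -> A) : Prop :=
  forall (a : A) (eps : K), 0 < eps ->
    exists (n : nat) (c : 'I_n -> K) (al : 'I_n -> U) (b : 'I_n -> A),
      `|a - \sum_(i < n) c i *: la (al i) (b i)| < eps.

Definition right_essential (U A : completeNormedModType K) (ra : A -> U -> A) : Prop :=
  forall (a : A) (eps : K), 0 < eps ->
    exists (n : nat) (c : 'I_n -> K) (al : 'I_n -> U) (b : 'I_n -> A),
      `|a - \sum_(i < n) c i *: ra (b i) (al i)| < eps.

Definition banach_A_U_module (U : completeNormedModType K) (mulU : U -> U -> U)
    (A : completeNormedModType K) (mulA : A -> A -> A)
    (la : U -> A -> A) (ra : A -> U -> A)
    (X : completeNormedModType K) (l : A -> X -> X) (r : X -> A -> X)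
    (lu : U -> X -> X) (ru : X -> U -> X) : Prop :=
  banach_bimodule mulA l r /\ banach_bimodule mulU lu ru /\
  (forall al a x, lu al (l a x) = l (la al a) x) /\
  (forall al a x, l a (lu al x) = l (ra a al) x) /\
  (forall al a x, l a (ru x al) = ru (l a x) al) /\
  (forall al a x, r (lu al x) a = lu al (r x a)) /\
  (forall al a x, r (ru x al) a = r x (la al a)) /\
  (forall al a x, ru (r x a) al = r x (ra a al)).

Definition commutative_U_module (U X : completeNormedModType K)
    (lu : U -> X -> X) (ru : X -> U -> X) : Prop :=
  forall al x, lu al x = ru x al.

(* module derivation: additive (not assumed K-linear), bounded, Leibniz,
   U-module map *)
Definition module_derivation (U A : completeNormedModType K) (mulA : A -> A -> A)
    (la : U -> A -> A) (ra : A -> U -> A)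
    (X : completeNormedModType K) (l : A -> X -> X) (r : X -> A -> X)
    (lu : U -> X -> X) (ru : X -> U -> X) (D : A -> X) : Prop :=
  (forall a b, D (a + b) = D a + D b) /\
  (exists M : K, forall a, `|D a| <= M * `|a|) /\
  (forall a b, D (mulA a b) = r (D a) b + l a (D b)) /\
  (forall al a, D (la al a) = lu al (D a)) /\
  (forall al a, D (ra a al) = ru (D a) al).

Definition approx_inner (A X : completeNormedModType K)
    (l : A -> X -> X) (r : X -> A -> X) (D : A -> X) : Prop :=
  exists (I : Type) (le : I -> I -> Prop) (x : I -> X),
    directed le /\
    forall a (eps : K), 0 < eps -> exists i0, forall i, le i0 i ->
      `|D a - (l a (x i) - r (x i) a)| <= eps.

Definition module_approx_contractible (U : completeNormedModType K)
    (mulU : U -> U -> U) (A : completeNormedModType K) (mulA : A -> A -> A)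
    (la : U -> A -> A) (ra : A -> U -> A) : Prop :=
  forall (X : completeNormedModType K) (l : A -> X -> X) (r : X -> A -> X)
         (lu : U -> X -> X) (ru : X -> U -> X),
    banach_A_U_module mulU mulA la ra l r lu ru ->
    commutative_U_module lu ru ->
    forall D : A -> X, module_derivation mulA la ra l r lu ru D ->
      approx_inner l r D.

End Defs.

(* A module derivation D is additive and bounded, and
   D (c *: (al . b)) = D ((c al) . b) = (c al) . D b = c *: D (al . b);
   since the products al . b span a dense subspace, D is C-linear, i.e. an
   ordinary bounded derivation of A into X.  Approximate amenability, applied
   to the dual module X^* and the derivation a |-> (phi |-> phi (D a)) into
   X^**, makes D approximately inner in X^**.  To come back to X it suffices,
   for finitely many a_1, ..., a_n and e > 0, to find x with
   |D a_k - (a_k.x - x.a_k)| <= e for all k.  Otherwise (D a_k)_k is at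
   distance > e from the subspace {(a_k.x - x.a_k)_k} of X^n, so Hahn-Banach
   gives phi_1, ..., phi_n in X^* with sum_k phi_k (a_k.x - x.a_k) = 0 for all
   x but Re (sum_k phi_k (D a_k)) = e, whereas approximate innerness in X^**
   forces sum_k phi_k (D a_k) = 0. *)

From HB Require Import structures.
From mathcomp Require Import all_boot all_order all_algebra.
From mathcomp Require Import all_classical all_reals all_analysis.
From mathcomp Require Import complex.
From mathcomp Require Import ring lra.
Import numFieldNormedType.Exports.
Import Order.TTheory GRing.Theory Num.Theory.
Local Open Scope classical_set_scope.
Local Open Scope ring_scope.
Local Open Scope complex_scope.
Set Implicit Arguments.
Unset Strict Implicit.
Unset Printing Implicit Defensive.

(* Norms over [C = R[i]] are complex numbers with zero imaginary part; all
   estimates are carried out on their real parts [Re `|x|]. *)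
Section ComplexNorm.
Variable R : realType.
Local Notation C := R[i].
Local Notation Re := (@complex.Re R).
Local Notation Im := (@complex.Im R).

Lemma ger0_ReE (z : C) : 0 <= z -> z = (Re z)%:C.
Proof. by rewrite lecE => /andP[/eqP Im0 _]; case: z Im0 => a b /= ->. Qed.

Lemma Re_gt0 (z : C) : 0 < z -> 0 < Re z.
Proof. by move=> z0; rewrite -ltcR -ger0_ReE ?ltW. Qed.

Section Normed.
Variable V : normedModType C.

Lemma normr_ReE (x : V) : `|x| = (Re `|x|)%:C.
Proof. exact/ger0_ReE/normr_ge0. Qed.

Lemma Re_normr_ge0 (x : V) : 0 <= Re `|x|.
Proof. by rewrite -lecR -normr_ReE normr_ge0. Qed.

Lemma Re_normrD (x y : V) : Re `|x + y| <= Re `|x| + Re `|y|.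
Proof.
by have := ler_normD x y; rewrite (normr_ReE (x + y)) (normr_ReE x) (normr_ReE y) -rmorphD lecR.
Qed.

Lemma Re_normrZ (k : C) (x : V) : Re `|k *: x| = Re `|k| * Re `|x|.
Proof. by rewrite normrZ (ger0_ReE (normr_ge0 k)) [`|x|]normr_ReE -rmorphM. Qed.

Lemma Re_normr_sum (I : Type) (r : seq I) (P : pred I) (w : I -> V) :
  Re `|\sum_(i <- r | P i) w i| <= \sum_(i <- r | P i) Re `|w i|.
Proof.
apply: (big_ind2 (fun (x : V) (y : R) => Re `|x| <= y)) => //; first by rewrite normr0.
by move=> x1 y1 x2 y2 h1 h2; apply: le_trans (Re_normrD _ _) (lerD h1 h2).
Qed.

Lemma Re_normr_eq0 (x : V) : Re `|x| = 0 -> x = 0.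
Proof. by move=> x0; apply/normr0_eq0; rewrite normr_ReE x0. Qed.

Lemma eq0_Re_normr_small (x : V) (K : R) : 0 <= K ->
  (forall e : R, 0 < e -> Re `|x| <= e * K) -> x = 0.
Proof.
move=> K0 small; apply/Re_normr_eq0/eqP; rewrite eq_le Re_normr_ge0 andbT.
apply/ler_addgt0Pr => e e0; rewrite add0r; have K1 : 0 < K + 1 by lra.
apply: le_trans (small _ (divr_gt0 e0 K1)) _.
by rewrite mulrAC ler_pdivrMr // ler_pM2l //; lra.
Qed.

End Normed.

Lemma normC_ReE (z : C) : `|z| = (Re `|z|)%:C.
Proof. exact: (@normr_ReE C^o). Qed.

Lemma Re_normC_ge0 (z : C) : 0 <= Re `|z|.
Proof. exact: (@Re_normr_ge0 C^o). Qed.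

Lemma Re_normCD (z w : C) : Re `|z + w| <= Re `|z| + Re `|w|.
Proof. exact: (@Re_normrD C^o). Qed.

Lemma Re_normCM (z w : C) : Re `|z * w| = Re `|z| * Re `|w|.
Proof. exact: (@Re_normrZ C^o). Qed.

Lemma normC_real (t : R) : `|t%:C| = `|t|%:C.
Proof. by rewrite normc_def /= expr0n addr0 sqrtr_sqr. Qed.

Lemma normC_i : `|'i%C| = 1 :> C.
Proof. by rewrite normc_def /= expr0n expr1n add0r sqrtr1. Qed.

Lemma norm_Re_le (z : C) : `|Re z| <= Re `|z|.
Proof. by rewrite -lecR -normC_ReE normc_ge_Re. Qed.

Lemma norm_Im_le (z : C) : `|Im z| <= Re `|z|.
Proof. by have := norm_Re_le (z * 'i); rewrite ReiNIm normrN Re_normCM normC_i mulr1. Qed.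

Lemma Re_normC_le_ReIm (z : C) : Re `|z| <= `|Re z| + `|Im z|.
Proof.
rewrite -lecR -normC_ReE rmorphD {1}[z]complexE (le_trans (ler_normD _ _)) //.
by rewrite normrM !normC_real normC_i mul1r.
Qed.

Lemma Re_bounded (V W : normedModType C) (f : V -> W) (M : C) :
  (forall u, `|f u| <= M * `|u|) ->
  exists2 M' : R, 0 <= M' & forall u, Re `|f u| <= M' * Re `|u|.
Proof.
move=> fM; exists (Re `|M|) => [|u]; first exact: Re_normC_ge0.
have : `|f u| <= `|M| * `|u|.
  by rewrite -(normr_id u) -normrM ger0_norm // (le_trans (normr_ge0 _) (fM u)).
by rewrite normr_ReE [`|M|]normC_ReE [`|u|]normr_ReE -rmorphM lecR.
Qed.

Lemma Re_bounded2 (U V W : normedModType C) (f : U -> V -> W) :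
  (exists M : C, forall u v, `|f u v| <= M * `|u| * `|v|) ->
  exists2 M : R, 0 <= M & forall u v, Re `|f u v| <= M * Re `|u| * Re `|v|.
Proof.
case=> M fM; exists (Re `|M|) => [|u v]; first exact: Re_normC_ge0.
have : `|f u v| <= `|M| * `|u| * `|v|.
  rewrite -(normr_id u) -(normr_id v) -!normrM ger0_norm //.
  exact: le_trans (normr_ge0 _) (fM u v).
by rewrite normr_ReE [`|M|]normC_ReE [`|u|]normr_ReE [`|v|]normr_ReE -!rmorphM lecR.
Qed.

End ComplexNorm.

(** * The dual Banach space *)

Lemma cauchy_real_lim (R : realType) (T : Type) (F : set_system T)
    (FF : ProperFilter F) (u : T -> R) :
  (forall e, 0 < e -> exists2 S, F S & forall s t, S s -> S t -> `|u s - u t| < e) ->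
  exists l : R, forall e, 0 < e -> exists2 S, F S & forall s, S s -> `|u s - l| < e.
Proof.
move=> uC; have : cauchy (u @ F).
  apply/cauchy_ballP => e e0; have [S FS uS] := uC e e0.
  have FuS : F (u @^-1` (u @` S)) by apply: filterS FS => s Ss; exists s.
  exists (u @` S, u @` S) => //.
  by move=> [_ _] /= [[s Ss <-] [t St <-]]; rewrite -ball_normE /ball_ /= uS.
move=> /R_complete/cvgrPdist_lt ul; exists (lim (u @ F)) => e /ul Fu.
by exists (u @^-1` [set y | `|lim (u @ F) - y| < e]) => // s /=; rewrite distrC.
Qed.

Section Dual.
Variable R : realType.
Local Notation C := R[i].
Local Notation Re := (@complex.Re R).
Variable X : normedModType C.

Record dual := Dual {
  dual_fun :> X -> C;
  dual_funD : forall x y, dual_fun (x + y) = dual_fun x + dual_fun y;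
  dual_funZ : forall (k : C) x, dual_fun (k *: x) = k * dual_fun x;
  dual_bounded : exists2 M : R, 0 <= M & forall x, Re `|dual_fun x| <= M * Re `|x| }.

Lemma dual_ext (f g : dual) : f =1 g -> f = g.
Proof.
case: f g => f fD fZ fB [g gD gZ gB] /= /funext fg; subst g.
by rewrite (Prop_irrelevance fD gD) (Prop_irrelevance fZ gZ) (Prop_irrelevance fB gB).
Qed.

Lemma dual_fun0 (f : dual) : f 0 = 0.
Proof. by apply: (@addrI _ (f 0)); rewrite addr0 -dual_funD addr0. Qed.

Lemma dual_funN (f : dual) x : f (- x) = - f x.
Proof. by rewrite -scaleN1r dual_funZ mulN1r. Qed.

Lemma dual_funB (f : dual) x y : f (x - y) = f x - f y.
Proof. by rewrite dual_funD dual_funN. Qed.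

Definition dual_zero : dual.
Proof.
exists (fun=> 0) => [x y|k x|]; rewrite ?addr0 ?mulr0 //.
by exists 0 => // x; rewrite normr0 mul0r.
Defined.

Definition dual_opp (f : dual) : dual.
Proof.
exists (fun x => - f x) => [x y|k x|]; first by rewrite dual_funD opprD.
  by rewrite dual_funZ mulrN.
by have [M M0 fM] := dual_bounded f; exists M => // x; rewrite normrN.
Defined.

Definition dual_add (f g : dual) : dual.
Proof.
exists (fun x => f x + g x) => [x y|k x|]; first by rewrite !dual_funD addrACA.
  by rewrite !dual_funZ mulrDr.
have [[M M0 fM] [N N0 gN]] := (dual_bounded f, dual_bounded g).
exists (M + N) => [|x]; first exact: addr_ge0.
by rewrite mulrDl (le_trans (Re_normCD _ _)) // lerD.
Defined.

Definition dual_scale (k : C) (f : dual) : dual.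
Proof.
exists (fun x => k * f x) => [x y|c x|]; first by rewrite dual_funD mulrDr.
  by rewrite dual_funZ mulrCA.
have [M M0 fM] := dual_bounded f; exists (Re `|k| * M) => [|x].
  by rewrite mulr_ge0 ?Re_normC_ge0.
by rewrite Re_normCM -mulrA ler_wpM2l ?Re_normC_ge0.
Defined.

Lemma dual_addA : associative dual_add.
Proof. by move=> f g h; apply: dual_ext => x /=; rewrite addrA. Qed.
Lemma dual_addC : commutative dual_add.
Proof. by move=> f g; apply: dual_ext => x /=; rewrite addrC. Qed.
Lemma dual_add0 : left_id dual_zero dual_add.
Proof. by move=> f; apply: dual_ext => x /=; rewrite add0r. Qed.
Lemma dual_addN : left_inverse dual_zero dual_opp dual_add.
Proof. by move=> f; apply: dual_ext => x /=; rewrite addNr. Qed.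

HB.instance Definition _ := gen_eqMixin dual.
HB.instance Definition _ := gen_choiceMixin dual.
HB.instance Definition _ :=
  GRing.isZmodule.Build dual dual_addA dual_addC dual_add0 dual_addN.

Lemma dual_scaleA a b (f : dual) : dual_scale a (dual_scale b f) = dual_scale (a * b) f.
Proof. by apply: dual_ext => x /=; rewrite mulrA. Qed.
Lemma dual_scale1 : left_id 1 dual_scale.
Proof. by move=> f; apply: dual_ext => x /=; rewrite mul1r. Qed.
Lemma dual_scaleDr : right_distributive dual_scale (@GRing.add dual).
Proof. by move=> k f g; apply: dual_ext => x /=; rewrite mulrDr. Qed.
Lemma dual_scaleDl (f : dual) : {morph dual_scale^~ f : a b / a + b}.
Proof. by move=> a b; apply: dual_ext => x /=; rewrite mulrDl. Qed.

HB.instance Definition _ := GRing.Zmodule_isLmodule.Build C dual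
  dual_scaleA dual_scale1 dual_scaleDr dual_scaleDl.

Lemma dualE0 x : (0 : dual) x = 0. Proof. by []. Qed.
Lemma dualED (f g : dual) x : (f + g) x = f x + g x. Proof. by []. Qed.
Lemma dualEB (f g : dual) x : (f - g) x = f x - g x. Proof. by []. Qed.
Lemma dualEZ k (f : dual) x : (k *: f) x = k * f x. Proof. by []. Qed.

Lemma dualE_sum (I : Type) (r : seq I) (P : pred I) (g : I -> dual) x :
  (\sum_(i <- r | P i) g i) x = \sum_(i <- r | P i) g i x.
Proof. exact: (big_morph (fun h : dual => h x) (fun h1 h2 => dualED h1 h2 x) (dualE0 x)). Qed.

Definition dual_bounds (f : dual) : set R :=
  [set M | 0 <= M /\ forall x, Re `|f x| <= M * Re `|x|].
Definition dual_normR (f : dual) : R := inf (dual_bounds f).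

Lemma dual_normR_ge0 (f : dual) : 0 <= dual_normR f.
Proof.
apply: lb_le_inf => [|M []//]; have [M M0 fM] := dual_bounded f; by exists M.
Qed.

Lemma dual_normR_le (f : dual) M :
  0 <= M -> (forall x, Re `|f x| <= M * Re `|x|) -> dual_normR f <= M.
Proof. by move=> M0 fM; apply: ge_inf => //; exists 0 => N []. Qed.

Lemma dual_normR_bound (f : dual) x : Re `|f x| <= dual_normR f * Re `|x|.
Proof.
have [x0|xn0] := eqVneq (Re `|x|) 0.
  by rewrite x0 mulr0 (Re_normr_eq0 x0) dual_fun0 normr0.
have xp : 0 < Re `|x| by rewrite lt_neqAle eq_sym xn0 Re_normr_ge0.
rewrite -ler_pdivrMr //; apply: lb_le_inf => [|M [M0 fM]].
  by have [M M0 fM] := dual_bounded f; exists M.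
by rewrite ler_pdivrMr.
Qed.

Lemma dual_normRD (f g : dual) : dual_normR (f + g) <= dual_normR f + dual_normR g.
Proof.
apply: dual_normR_le => [|x]; first by rewrite addr_ge0 ?dual_normR_ge0.
by rewrite dualED (le_trans (Re_normCD _ _)) // mulrDl lerD ?dual_normR_bound.
Qed.

Lemma dual_normRZ_le k (f : dual) : dual_normR (k *: f) <= Re `|k| * dual_normR f.
Proof.
apply: dual_normR_le => [|x]; first by rewrite mulr_ge0 ?dual_normR_ge0 ?Re_normC_ge0.
by rewrite dualEZ Re_normCM -mulrA ler_wpM2l ?Re_normC_ge0 ?dual_normR_bound.
Qed.

Lemma dual_normRZ k (f : dual) : dual_normR (k *: f) = Re `|k| * dual_normR f.
Proof.
apply/eqP; rewrite eq_le dual_normRZ_le.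
have [->|kn0] := eqVneq k 0; first by rewrite normr0 mul0r dual_normR_ge0.
have kp : 0 < Re `|k| by rewrite -ltcR -normC_ReE normr_gt0.
have := dual_normRZ_le k^-1 (k *: f); rewrite scalerA mulVf // scale1r.
rewrite normrV ?unitfE // normC_ReE -fmorphV /= => fk.
by rewrite -ler_pdivlMl // mulrC.
Qed.

Lemma dual_normR_eq0 (f : dual) : dual_normR f = 0 -> f = 0.
Proof.
move=> f0; apply: dual_ext => x; apply/(@Re_normr_eq0 _ C^o)/eqP.
by rewrite eq_le Re_normC_ge0 andbT (le_trans (dual_normR_bound f x)) // f0 mul0r.
Qed.

Definition dual_norm (f : dual) : C := (dual_normR f)%:C.

Lemma dual_normD (f g : dual) : dual_norm (f + g) <= dual_norm f + dual_norm g.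
Proof. by rewrite -rmorphD lecR dual_normRD. Qed.
Lemma dual_normZ (k : C) (f : dual) : dual_norm (k *: f) = `|k| * dual_norm f.
Proof. by rewrite /dual_norm dual_normRZ [`|k|]normC_ReE -rmorphM. Qed.
Lemma dual_norm_eq0 (f : dual) : dual_norm f = 0 -> f = 0.
Proof. by move/complexI; apply: dual_normR_eq0. Qed.

HB.instance Definition _ :=
  Lmodule_isNormed.Build C dual dual_normD dual_normZ dual_norm_eq0.

Lemma dual_normE (f : dual) : `|f| = (dual_normR f)%:C.
Proof. by []. Qed.

Lemma dual_norm_le (f : dual) (M : R) :
  0 <= M -> (forall x, Re `|f x| <= M * Re `|x|) -> `|f| <= M%:C.
Proof. by move=> M0 fM; rewrite dual_normE lecR dual_normR_le. Qed.

End Dual.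

Section DualComplete.
Variable R : realType.
Local Notation C := R[i].
Local Notation Re := (@complex.Re R).
Local Notation Im := (@complex.Im R).
Variable X : normedModType C.
Local Notation dual := (dual X).

Lemma dual_uniform_limit (g : X -> C) :
  (forall e, 0 < e -> exists f : dual, forall x, Re `|f x - g x| <= e * Re `|x|) ->
  exists G : dual, G =1 g.
Proof.
move=> approx.
have gD x y : g (x + y) = g x + g y.
  apply/eqP; rewrite -subr_eq0; apply/eqP.
  apply: (@eq0_Re_normr_small _ C^o _ (Re `|x + y| + Re `|x| + Re `|y|)).
    by rewrite !addr_ge0 ?Re_normr_ge0.
  move=> e /approx[f fg].
  have -> : g (x + y) - (g x + g y) = (f x - g x) + (f y - g y) - (f (x + y) - g (x + y)).
    by rewrite dual_funD; ring.
  rewrite !mulrDr; apply: le_trans (Re_normCD _ _) _.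
  rewrite normrN addrC -[in X in _ <= X]addrA.
  by rewrite lerD ?fg // (le_trans (Re_normCD _ _)) // lerD.
have gZ k x : g (k *: x) = k * g x.
  apply/eqP; rewrite -subr_eq0; apply/eqP.
  apply: (@eq0_Re_normr_small _ C^o _ (Re `|k *: x| + Re `|k| * Re `|x|)).
    by rewrite !addr_ge0 ?mulr_ge0 ?Re_normr_ge0 ?Re_normC_ge0.
  move=> e /approx[f fg].
  have -> : g (k *: x) - k * g x = k * (f x - g x) - (f (k *: x) - g (k *: x)).
    by rewrite dual_funZ; ring.
  rewrite [in X in _ <= X]mulrDr; apply: le_trans (Re_normCD _ _) _.
  rewrite normrN addrC; apply: lerD; first exact: fg.
  by rewrite Re_normCM mulrCA ler_wpM2l ?Re_normC_ge0.
have gB : exists2 M : R, 0 <= M & forall x, Re `|g x| <= M * Re `|x|.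
  have [f fg] := approx 1 ltr01.
  exists (dual_normR f + 1) => [|x]; first by rewrite addr_ge0 ?dual_normR_ge0.
  have -> : g x = f x - (f x - g x) by rewrite subKr.
  apply: le_trans (Re_normCD _ _) _; rewrite normrN mulrDl mul1r.
  by rewrite lerD ?dual_normR_bound // -[Re `|x|]mul1r fg.
by exists (Dual gD gZ gB).
Qed.

Lemma cauchy_dual_small (F : set_system dual) : ProperFilter F -> cauchy F ->
  forall e : R, 0 < e -> exists2 S, F S & forall f g, S f -> S g -> dual_normR (f - g) < e.
Proof.
move=> FF /cauchy_ballP FC e e0; have := FC e%:C; rewrite ltcR => /(_ e0).
move=> [[S T] [/= FS FT] ST]; exists (S `&` T); first exact: filterI.
move=> f g [Sf _] [_ Tg]; have := ST (f, g) (conj Sf Tg).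
by rewrite /= -ball_normE /ball_ /= dual_normE ltcR.
Qed.

Lemma cauchy_dual_pointwise (F : set_system dual) : ProperFilter F -> cauchy F ->
  forall x, exists l : C, forall e, 0 < e -> exists2 S, F S & forall f, S f -> Re `|f x - l| < e.
Proof.
move=> FF FC x.
have part_cauchy (part : C -> R) : (forall z, `|part z| <= Re `|z|) ->
    (forall z w, part (z - w) = part z - part w) ->
    forall e, 0 < e -> exists2 S, F S & forall f g : dual, S f -> S g ->
      `|part (f x) - part (g x)| < e.
  move=> part_le partB e e0; have x1 : 0 < Re `|x| + 1 by rewrite ltr_wpDl ?Re_normr_ge0.
  have [S FS Sfg] := cauchy_dual_small FF FC (divr_gt0 e0 x1).
  exists S => // f g Sf Sg; rewrite -partB -dualEB.
  apply: le_lt_trans (part_le _) _; apply: le_lt_trans (dual_normR_bound _ _) _.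
  apply: le_lt_trans (ler_wpM2r (Re_normr_ge0 x) (ltW (Sfg f g Sf Sg))) _.
  by rewrite mulrAC ltr_pdivrMr // ltr_pM2l //; lra.
have ReB (z w : C) : Re (z - w) = Re z - Re w by case: z w => ? ? [].
have ImB (z w : C) : Im (z - w) = Im z - Im w by case: z w => ? ? [].
have [a Fa] := cauchy_real_lim FF (part_cauchy _ (@norm_Re_le R) ReB).
have [b Fb] := cauchy_real_lim FF (part_cauchy _ (@norm_Im_le R) ImB).
exists (a +i* b) => e e0; have e2 : 0 < e / 2 by rewrite divr_gt0.
have [[S FS Sa] [T FT Tb]] := (Fa _ e2, Fb _ e2).
exists (S `&` T) => [|f [Sf Tf]]; first exact: filterI.
apply: le_lt_trans (Re_normC_le_ReIm _) _.
by rewrite ReB ImB /= (splitr e) ltrD ?Sa ?Tb.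
Qed.

Lemma dual_complete (F : set_system dual) : ProperFilter F -> cauchy F -> cvg F.
Proof.
move=> FF FC; have [g Fg] := choice (cauchy_dual_pointwise FF FC).
have uniform e : 0 < e -> exists2 S, F S & forall f x, S f -> Re `|f x - g x| <= e * Re `|x|.
  move=> e0; have [S FS Sfg] := cauchy_dual_small FF FC e0.
  exists S => // f x Sf; apply/ler_addgt0Pr => d d0.
  have [T FT Tg] := Fg x d d0; have [h [Sh Th]] := filter_ex (filterI FS FT).
  rewrite -(subrK (h x) (f x)) -addrA; apply: le_trans (Re_normCD _ _) _.
  apply: lerD; last exact/ltW/Tg.
  rewrite -dualEB (le_trans (dual_normR_bound _ _)) //.
  by rewrite ler_wpM2r ?Re_normr_ge0 // ltW ?Sfg.
have [G Gg] : exists G : dual, G =1 g.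
  apply: dual_uniform_limit => e /uniform[S FS Sfg].
  by have [f Sf] := filter_ex FS; exists f => x; apply: Sfg.
apply/cvg_ex; exists G; apply/(@cvgrPdist_le _ _ _ F _ id G) => e e0.
have [S FS Sfg] := uniform _ (Re_gt0 e0).
apply: filterS FS => f Sf; rewrite dual_normE (ger0_ReE (ltW e0)) lecR.
apply: dual_normR_le => [|x]; first by rewrite ltW ?Re_gt0.
by rewrite dualEB distrC Gg Sfg.
Qed.

HB.instance Definition _ := Uniform_isComplete.Build dual dual_complete.

End DualComplete.

(** * Hahn-Banach separation *)

Section HahnBanach.
Variable R : realType.
Variable V : lmodType R.
Variable p : V -> R.
Hypothesis pD : forall u v, p (u + v) <= p u + p v.
Hypothesis pZ : forall t v, 0 <= t -> p (t *: v) = t * p v.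

(* A linear functional on a subspace of [V] is encoded by its graph. *)
Definition dominated_graph (G : set (V * R)) :=
  [/\ (forall v y z, G (v, y) -> G (v, z) -> y = z),
      (forall v w y z, G (v, y) -> G (w, z) -> G (v + w, y + z)),
      (forall t v y, G (v, y) -> G (t *: v, t * y)),
      (forall v y, G (v, y) -> y <= p v) &
      G (0, 0)].

Lemma dominated_graphB G u v y z : dominated_graph G ->
  G (u, y) -> G (v, z) -> G (u - v, y - z).
Proof.
case=> _ GD GZ _ _ Gu Gv; have := GD _ _ _ _ Gu (GZ (-1) _ _ Gv).
by rewrite scaleN1r mulN1r.
Qed.

(* The value [m] at the new vector is squeezed between the two families of
   bounds coming from positive and negative multiples of it. *)
Lemma dominated_extension_value G v1 : dominated_graph G ->
  exists m, forall u y s, G (u, y) -> y + s * m <= p (u + s *: v1).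
Proof.
case=> _ GD GZ Gp G0.
pose E : set R := [set r | exists w z, G (w, z) /\ r = z - p (w - v1)].
have Ebound u y w z : G (u, y) -> G (w, z) -> z - p (w - v1) <= p (u + v1) - y.
  move=> Gu Gw; suff : y + z <= p (u + v1) + p (w - v1) by lra.
  apply: le_trans (Gp _ _ (GD _ _ _ _ Gu Gw)) _.
  by rewrite -[u + w]addr0 -(subrr v1) -addrACA pD.
have E0 : E !=set0 by exists (0 - p (0 - v1)), 0, 0.
have Eub : has_ubound E by exists (p (0 + v1) - 0) => _ [w [z [Gw ->]]]; exact: Ebound.
exists (sup E) => u y s Gu.
have scaleK t w : 0 < t -> t * p (t^-1 *: u + w) = p (u + t *: w).
  by move=> t0; rewrite -pZ ?ltW // scalerDr scalerA mulfV ?gt_eqF ?scale1r.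
have [s0|s0|->] := ltgtP s 0; last by rewrite mul0r scale0r !addr0 Gp.
- have ns0 : 0 < - s by rewrite oppr_gt0.
  have : (- s)^-1 * y - p ((- s)^-1 *: u - v1) <= sup E.
    by apply: ub_le_sup => //; exists ((- s)^-1 *: u), ((- s)^-1 * y); split => //; apply: GZ.
  move=> /(ler_wpM2l (ltW ns0)); rewrite mulrBr mulrA mulfV ?gt_eqF // mul1r.
  by rewrite -scaleN1r scaleK // scalerA mulrN1 opprK; lra.
- have : sup E <= p (s^-1 *: u + v1) - s^-1 * y.
    by apply: ge_sup => // _ [w [z [Gw ->]]]; apply: Ebound => //; apply: GZ.
  move=> /(ler_wpM2l (ltW s0)); rewrite mulrBr mulrA mulfV ?gt_eqF // mul1r.
  by rewrite -[v1 in p (_ + v1)]scale1r scaleK // scale1r; lra.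
Qed.

Lemma dominated_graph_extend G v1 : dominated_graph G -> ~ (exists y, G (v1, y)) ->
  exists2 G', dominated_graph G' & G `<=` G' /\ exists y, G' (v1, y).
Proof.
move=> domG nGv1; have [m mP] := dominated_extension_value v1 domG.
have [Gfun GD GZ Gp G0] := domG.
pose G' : set (V * R) := [set vy | exists u y s, G (u, y) /\ vy = (u + s *: v1, y + s * m)].
exists G'; last split.
- split.
  + move=> _ _ _ [u [y [s [Gu [-> ->]]]]] [u' [y' [s' [Gu' [uu' ->]]]]].
    have [ss'|ss'] := eqVneq s s'.
      by subst s'; move/addIr: uu' => uu'; subst u'; rewrite (Gfun _ _ _ Gu Gu').
    exfalso; apply: nGv1; exists ((s - s')^-1 * (y' - y)).
    have d : u' - u = (s - s') *: v1.
      rewrite scalerBl; apply: (addIr (u + s' *: v1)).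
      by rewrite addrA subrK [RHS]addrCA subrK uu'.
    have -> : v1 = (s - s')^-1 *: (u' - u) by rewrite d scalerA mulVf ?subr_eq0 ?scale1r.
    exact: GZ (dominated_graphB domG Gu' Gu).
  + move=> _ _ _ _ [u [y [s [Gu [-> ->]]]]] [u' [y' [s' [Gu' [-> ->]]]]].
    exists (u + u'), (y + y'), (s + s'); split; first exact: GD.
    by congr pair; [rewrite scalerDl addrACA | ring].
  + move=> t _ _ [u [y [s [Gu [-> ->]]]]].
    exists (t *: u), (t * y), (t * s); split; first exact: GZ.
    by congr pair; [rewrite scalerDr scalerA | ring].
  + by move=> _ _ [u [y [s [Gu [-> ->]]]]]; apply: mP.
  + by exists 0, 0, 0; rewrite scale0r mul0r !addr0.
- by move=> [v y] Gv; exists v, y, 0; rewrite scale0r mul0r !addr0.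
- by exists m, 0, 0, 1; rewrite scale1r mul1r !add0r.
Qed.

Lemma dominated_graph_bigcup (F : set (set (V * R))) : F !=set0 ->
  total_on F subset -> F `<=` dominated_graph ->
  dominated_graph (\bigcup_(G in F) G).
Proof.
move=> [G0 FG0] Ftot Fdom.
have common G1 G2 a b : F G1 -> F G2 -> G1 a -> G2 b ->
    exists2 G, F G & G a /\ G b.
  move=> FG1 FG2 G1a G2b.
  by case: (Ftot _ _ FG1 FG2) => [/(_ _ G1a) | /(_ _ G2b)]; [exists G2 | exists G1].
split.
- move=> v y z [G1 F1 G1y] [G2 F2 G2z]; have [G FG [Gy Gz]] := common _ _ _ _ F1 F2 G1y G2z.
  by case: (Fdom _ FG) => Gfun _ _ _ _; apply: Gfun Gy Gz.
- move=> v w y z [G1 F1 G1v] [G2 F2 G2w]; have [G FG [Gv Gw]] := common _ _ _ _ F1 F2 G1v G2w.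
  by exists G => //; case: (Fdom _ FG) => _ GD _ _ _; apply: GD Gv Gw.
- by move=> t v y [G FG Gv]; exists G => //; case: (Fdom _ FG) => _ _ GZ _ _; apply: GZ.
- by move=> v y [G FG Gv]; case: (Fdom _ FG) => _ _ _ Gp _; apply: Gp.
- by exists G0 => //; case: (Fdom _ FG0).
Qed.

Theorem hahn_banach G0 : dominated_graph G0 ->
  exists F : V -> R, [/\ forall v w, F (v + w) = F v + F w,
    forall t v, F (t *: v) = t * F v,
    forall v, F v <= p v &
    forall v y, G0 (v, y) -> F v = y].
Proof.
move=> domG0.
pose T := {G : set (V * R) | dominated_graph G /\ G0 `<=` G}.
pose sub_graph (G1 G2 : T) : bool := `[< sval G1 `<=` sval G2 >].
have sub_graph_refl G : sub_graph G G by apply/asboolP.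
have sub_graph_trans G1 G2 G3 : sub_graph G1 G2 -> sub_graph G2 G3 -> sub_graph G1 G3.
  by move=> /asboolP G12 /asboolP G23; apply/asboolP; apply: subset_trans G23.
pose T0 : T := exist _ G0 (conj domG0 (@subset_refl _ G0)).
have [Gm Gm_max] : exists Gm : T, premaximal sub_graph Gm.
  apply: (ZL_preorder T0 sub_graph_refl sub_graph_trans) => A Atot.
  have [[G AG]|A0] := pselect (exists G, A G); last first.
    by exists T0 => G AG; exfalso; apply: A0; exists G.
  pose U := \bigcup_(G in sval @` A) G.
  have domU : dominated_graph U.
    apply: dominated_graph_bigcup; first by exists (sval G), G.
      by move=> _ _ [G1 AG1 <-] [G2 AG2 <-]; case: (Atot _ _ AG1 AG2) => /asboolP; by [left|right].
    by move=> _ [H _ <-]; case: (svalP H).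
  have G0U : G0 `<=` U.
    by move=> vy G0vy; exists (sval G); [exists G | case: (svalP G) => _; apply].
  exists (exist _ U (conj domU G0U)) => H AH; apply/asboolP => vy Hvy.
  by exists (sval H) => //; exists H.
have [domGm G0Gm] := svalP Gm.
have Gm_total v : exists y, sval Gm (v, y).
  apply: contrapT => nGmv; have [G' domG' [GmG' [y G'y]]] := dominated_graph_extend domGm nGmv.
  have /asboolP G'Gm := Gm_max (exist _ G' (conj domG' (subset_trans G0Gm GmG'))) (asboolT GmG').
  by apply: nGmv; exists y; apply: G'Gm.
have [F FGm] := choice Gm_total; have [Gfun GD GZ Gp _] := domGm.
exists F; split => [v w|t v|v|v y /G0Gm]; last exact: Gfun.
- exact/(Gfun (v + w))/GD.
- exact/(Gfun (t *: v))/GZ.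
- exact: Gp.
Qed.

End HahnBanach.

Definition realified (T : Type) : Type := T.

Section Realification.
Variable R : realType.
Local Notation C := R[i].
Variable V : lmodType C.

HB.instance Definition _ := GRing.Zmodule.on (realified V).

Definition realified_scale (t : R) (v : realified V) : realified V := t%:C *: (v : V).

Lemma realified_scaleA s t v :
  realified_scale s (realified_scale t v) = realified_scale (s * t) v.
Proof. by rewrite /realified_scale scalerA rmorphM. Qed.
Lemma realified_scale1 : left_id 1 realified_scale.
Proof. by move=> v; rewrite /realified_scale scale1r. Qed.
Lemma realified_scaleDr : right_distributive realified_scale +%R.
Proof. by move=> t u v; rewrite /realified_scale scalerDr. Qed.
Lemma realified_scaleDl v : {morph realified_scale^~ v : s t / s + t}.
Proof. by move=> s t; rewrite /realified_scale rmorphD scalerDl. Qed.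

HB.instance Definition _ := GRing.Zmodule_isLmodule.Build R (realified V)
  realified_scaleA realified_scale1 realified_scaleDr realified_scaleDl.

Lemma realified_scaleE t (v : realified V) : t *: v = t%:C *: (v : V).
Proof. by []. Qed.

End Realification.

Section Complexification.
Variable R : realType.
Local Notation C := R[i].
Local Notation Re := (@complex.Re R).
Local Notation Im := (@complex.Im R).
Variables (V : lmodType C) (F : V -> R).
Hypothesis FD : forall u v, F (u + v) = F u + F v.
Hypothesis FZ : forall (t : R) v, F (t%:C *: v) = t * F v.

Definition complexify (v : V) : C := F v +i* (- F ('i%C *: v)).

Lemma complexifyD u v : complexify (u + v) = complexify u + complexify v.
Proof. by rewrite /complexify scalerDr !FD; apply/eqP; rewrite eq_complex /= opprD !eqxx. Qed.

Lemma complexify_scale (k : C) v : F (k *: v) = Re k * F v + Im k * F ('i%C *: v).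
Proof. by rewrite {1}[k]complexE scalerDl mulrC -scalerA FD !FZ. Qed.

Lemma complexifyZ (k : C) v : complexify (k *: v) = k * complexify v.
Proof.
rewrite /complexify scalerA (complexify_scale k) (complexify_scale ('i * k)).
by case: k => a b; apply/eqP; rewrite eq_complex /=; apply/andP; split; apply/eqP; ring.
Qed.

End Complexification.

Section Separation.
Variable R : realType.
Local Notation C := R[i].
Local Notation Re := (@complex.Re R).
Variables (X V : lmodType C) (p : V -> R) (delta : X -> V).
Hypothesis pD : forall u v, p (u + v) <= p u + p v.
Hypothesis pZ : forall (k : C) v, p (k *: v) = Re `|k| * p v.
Hypothesis deltaD : forall x y, delta (x + y) = delta x + delta y.
Hypothesis deltaZ : forall (k : C) x, delta (k *: x) = k *: delta x.

Lemma seminorm0 : p 0 = 0.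
Proof. by rewrite -(scale0r 0) pZ normr0 mul0r. Qed.

Lemma seminormN v : p (- v) = p v.
Proof. by rewrite -scaleN1r pZ normrN normr1 mul1r. Qed.

Lemma seminorm_ge0 v : 0 <= p v.
Proof.
by have := pD v (- v); rewrite subrr seminorm0 seminormN; lra.
Qed.

Lemma seminorm_real_scale (t : R) v : 0 <= t -> p (t%:C *: v) = t * p v.
Proof. by move=> t0; rewrite pZ normC_real /= ger0_norm. Qed.

Lemma separating_functional (v0 : V) (e : R) : 0 < e ->
  (forall x, e < p (v0 - delta x)) ->
  exists psi : V -> C, [/\ forall u v, psi (u + v) = psi u + psi v,
      forall (k : C) v, psi (k *: v) = k * psi v,
      forall v, Re `|psi v| <= p v + p v,
      forall x, psi (delta x) = 0 & Re (psi v0) = e].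
Proof.
move=> e0 far.
have delta0 : delta 0 = 0 by rewrite -(scale0r 0) deltaZ scale0r.
have deltaN x : delta (- x) = - delta x by rewrite -scaleN1r deltaZ scaleN1r.
pose G0 : set (realified V * R) := [set vy | exists x t, vy = (delta x + t%:C *: v0, t * e)].
have domG0 : @dominated_graph _ (realified V) p G0.
  split.
  - move=> _ y z [x [t [-> ->]]] [x' [t' [xx' ->]]].
    have [-> //|tt'] := eqVneq t t'; exfalso.
    have d : (t - t')%:C *: v0 = delta (x' - x).
      rewrite rmorphB scalerBl deltaD deltaN; apply: (addIr (delta x + t'%:C *: v0)).
      by rewrite [LHS]addrCA subrK addrA subrK xx'.
    have v0E : v0 = delta (((t - t')^-1)%:C *: (x' - x)).
      by rewrite deltaZ -d scalerA -rmorphM mulVf ?subr_eq0 // scale1r.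
    by have := far (((t - t')^-1)%:C *: (x' - x)); rewrite -v0E subrr seminorm0 ltNge ltW.
  - move=> _ _ _ _ [x [t [-> ->]]] [x' [t' [-> ->]]].
    exists (x + x'), (t + t'); rewrite deltaD rmorphD scalerDl mulrDl.
    by congr pair; rewrite addrACA.
  - move=> c _ _ [x [t [-> ->]]]; exists (c%:C *: x), (c * t).
    by rewrite realified_scaleE scalerDr deltaZ scalerA -rmorphM mulrA.
  - move=> _ _ [x [t [-> ->]]]; have [t0|t0] := leP t 0.
      by apply: le_trans (seminorm_ge0 _); rewrite mulr_le0_ge0 // ltW.
    have -> : delta x + t%:C *: v0 = t%:C *: (v0 - delta ((- t^-1)%:C *: x)).
      rewrite scalerBr deltaZ scalerA -rmorphM mulrN mulfV ?gt_eqF //.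
      by rewrite rmorphN1 scaleN1r opprK addrC.
    rewrite seminorm_real_scale; last exact: ltW.
    by rewrite ler_pM2l // ltW.
  - by exists 0, 0; rewrite delta0 scale0r mul0r addr0.
have [F [FD FZ Fp FG0]] := hahn_banach (V := realified V) pD seminorm_real_scale domG0.
have Fabs w : `|F w| <= p w.
  have FN u : F (- u) = - F u by rewrite -scaleN1r FZ mulN1r.
  by rewrite ler_norml Fp andbT lerNl -FN (le_trans (Fp _)) ?seminormN.
have Fdelta x : F (delta x) = 0.
  by apply: FG0; exists x, 0; rewrite rmorph0 scale0r addr0 mul0r.
exists (complexify F); split.
- exact: complexifyD FD.
- exact: complexifyZ FD FZ.
- move=> v; apply: le_trans (Re_normC_le_ReIm _) _; rewrite /= normrN.
  by rewrite lerD ?Fabs // (le_trans (Fabs _)) // pZ normC_i mul1r.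
- by move=> x; rewrite /complexify -deltaZ !Fdelta oppr0.
- by apply: FG0; exists 0, 1; rewrite delta0 add0r rmorph1 scale1r mul1r.
Qed.

End Separation.

Section SumNorm.
Variable R : realType.
Local Notation C := R[i].
Local Notation Re := (@complex.Re R).
Variables (X : normedModType C) (n : nat).

Definition sum_norm (v : 'I_n -> X) : R := \sum_(k < n) Re `|v k|.

Lemma sum_normD u v : sum_norm (u + v) <= sum_norm u + sum_norm v.
Proof. by rewrite /sum_norm -big_split ler_sum // => k _; apply: Re_normrD. Qed.

Lemma sum_normZ (c : C) v : sum_norm (c *: v) = Re `|c| * sum_norm v.
Proof. by rewrite /sum_norm mulr_sumr; apply: eq_bigr => k _; apply: Re_normrZ. Qed.

Lemma le_sum_norm v k : Re `|v k| <= sum_norm v.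
Proof.
by rewrite /sum_norm (bigD1 k) //= lerDl sumr_ge0 // => j _; apply: Re_normr_ge0.
Qed.

Definition single (k : 'I_n) (x : X) : 'I_n -> X := fun j => if j == k then x else 0.

Lemma singleD k x y : single k (x + y) = single k x + single k y.
Proof. by apply: funext => j; rewrite fctE /single /=; case: (j == k); rewrite ?addr0. Qed.

Lemma singleZ k (c : C) x : single k (c *: x) = c *: single k x.
Proof. by apply: funext => j; rewrite fctE /single /=; case: (j == k); rewrite ?scaler0. Qed.

Lemma sum_norm_single k x : sum_norm (single k x) = Re `|x|.
Proof.
rewrite /sum_norm (bigD1 k) //= /single eqxx big1 ?addr0 // => j /negbTE ->.
by rewrite normr0.
Qed.

Lemma sum_single (v : 'I_n -> X) : v = \sum_k single k (v k).
Proof.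
apply: funext => j; rewrite fct_sumE (bigD1 j) //= /single eqxx big1 ?addr0 //.
by move=> k /negbTE; rewrite eq_sym => ->.
Qed.

Lemma dual_coordinates (psi : ('I_n -> X) -> C) (M : R) : 0 <= M ->
  (forall u v, psi (u + v) = psi u + psi v) -> (forall (c : C) v, psi (c *: v) = c * psi v) ->
  (forall v, Re `|psi v| <= M * sum_norm v) ->
  exists phi : 'I_n -> dual X, forall v, psi v = \sum_k phi k (v k).
Proof.
move=> M0 psiD psiZ psiM.
have psi0 : psi 0 = 0 by rewrite -(scale0r 0) psiZ mul0r.
have phiD k x y : psi (single k (x + y)) = psi (single k x) + psi (single k y).
  by rewrite singleD psiD.
have phiZ k (c : C) x : psi (single k (c *: x)) = c * psi (single k x).
  by rewrite singleZ psiZ.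
have phiM k : exists2 M' : R, 0 <= M' & forall x, Re `|psi (single k x)| <= M' * Re `|x|.
  by exists M => // x; rewrite -(sum_norm_single k x) psiM.
exists (fun k => Dual (phiD k) (phiZ k) (phiM k)) => v /=.
by rewrite {1}[v]sum_single (big_morph psi psiD psi0).
Qed.

End SumNorm.

(** * The dual module *)

Section BilinearMap.
Variables (K : numFieldType) (U V W : lmodType K) (f : U -> V -> W).
Hypothesis fbil : bilinear_map f.

Lemma bilinearDl u1 u2 v : f (u1 + u2) v = f u1 v + f u2 v.
Proof. by case: fbil. Qed.
Lemma bilinearZl (k : K) u v : f (k *: u) v = k *: f u v.
Proof. by case: fbil => _ []. Qed.
Lemma bilinearDr u v1 v2 : f u (v1 + v2) = f u v1 + f u v2.
Proof. by case: fbil => _ [_ []]. Qed.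
Lemma bilinearZr (k : K) u v : f u (k *: v) = k *: f u v.
Proof. by case: fbil => _ [_ [_]]. Qed.

End BilinearMap.

Lemma directed_eventually_all (I : Type) (le : I -> I -> Prop) (T : eqType)
    (P : T -> I -> Prop) (s : seq T) : directed le ->
  (forall t, exists i0, forall i, le i0 i -> P t i) ->
  exists i0, forall i, le i0 i -> forall t, t \in s -> P t i.
Proof.
move=> [_ [le_trans [[i1 _] le_ub]]] evP; elim: s => [|t s [j0 Pj0]].
  by exists i1 => i _ t; rewrite in_nil.
have [i0 Pi0] := evP t; have [k [i0k j0k]] := le_ub i0 j0.
exists k => i ki u; rewrite in_cons => /orP[/eqP ->|us].
  exact: Pi0 (le_trans _ _ _ i0k ki).
exact: Pj0 (le_trans _ _ _ j0k ki) _ us.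
Qed.

Section DualModule.
Variable R : realType.
Local Notation C := R[i].
Local Notation Re := (@complex.Re R).
Variables (A X : completeNormedModType C) (mulA : A -> A -> A).
Variables (l : A -> X -> X) (r : X -> A -> X).
Hypothesis lr_bimod : banach_bimodule mulA l r.

Let l_bilinear : bilinear_map l := lr_bimod.1.1.
Let r_bilinear : bilinear_map r := lr_bimod.2.1.1.
Let l_bounded := Re_bounded2 lr_bimod.1.2.
Let r_bounded := Re_bounded2 lr_bimod.2.1.2.

Definition dual_lact (b : A) (phi : dual X) : dual X.
Proof.
exists (fun x => phi (r x b)) => [x y|k x|].
- by rewrite (bilinearDl r_bilinear) dual_funD.
- by rewrite (bilinearZl r_bilinear) dual_funZ.
have [M M0 rM] := r_bounded.
exists (dual_normR phi * M * Re `|b|) => [|x].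
  by rewrite !mulr_ge0 ?dual_normR_ge0 ?Re_normr_ge0.
apply: le_trans (dual_normR_bound _ _) _; rewrite -!mulrA ler_wpM2l ?dual_normR_ge0 //.
by apply: le_trans (rM x b) _; rewrite mulrA mulrAC.
Defined.

Definition dual_ract (phi : dual X) (a : A) : dual X.
Proof.
exists (fun x => phi (l a x)) => [x y|k x|].
- by rewrite (bilinearDr l_bilinear) dual_funD.
- by rewrite (bilinearZr l_bilinear) dual_funZ.
have [M M0 lM] := l_bounded.
exists (dual_normR phi * M * Re `|a|) => [|x].
  by rewrite !mulr_ge0 ?dual_normR_ge0 ?Re_normr_ge0.
apply: le_trans (dual_normR_bound _ _) _; rewrite -!mulrA ler_wpM2l ?dual_normR_ge0 //.
by rewrite mulrA; apply: lM.
Defined.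

Lemma dual_bimodule : banach_bimodule mulA dual_lact dual_ract.
Proof.
have [_ [_ [lM [rM lrA]]]] := lr_bimod.
split; [|split; [|split; [|split]]].
- split.
    split; [|split; [|split]].
    + by move=> a b phi; apply: dual_ext => x /=; rewrite (bilinearDr r_bilinear) dual_funD.
    + by move=> k a phi; apply: dual_ext => x /=; rewrite (bilinearZr r_bilinear) dual_funZ.
    + by move=> a phi psi; apply: dual_ext.
    + by move=> k a phi; apply: dual_ext.
  have [M M0 rMb] := r_bounded; exists M%:C => a phi.
  rewrite [`|a|]normr_ReE dual_normE -!rmorphM; apply: dual_norm_le => [|x].
    by rewrite !mulr_ge0 ?dual_normR_ge0 ?Re_normr_ge0.
  apply: le_trans (dual_normR_bound phi (r x a)) _.
  rewrite [leRHS](_ : _ = dual_normR phi * (M * Re `|x| * Re `|a|)); last by ring.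
  by apply: ler_wpM2l; [apply: dual_normR_ge0 | apply: rMb].
- split.
    split; [|split; [|split]].
    + by move=> phi psi a; apply: dual_ext.
    + by move=> k phi a; apply: dual_ext.
    + by move=> phi a b; apply: dual_ext => x /=; rewrite (bilinearDl l_bilinear) dual_funD.
    + by move=> k phi a; apply: dual_ext => x /=; rewrite (bilinearZl l_bilinear) dual_funZ.
  have [M M0 lMb] := l_bounded; exists M%:C => phi a.
  rewrite [`|a|]normr_ReE dual_normE -!rmorphM; apply: dual_norm_le => [|x].
    by rewrite !mulr_ge0 ?dual_normR_ge0 ?Re_normr_ge0.
  apply: le_trans (dual_normR_bound phi (l a x)) _.
  rewrite [leRHS](_ : _ = dual_normR phi * (M * Re `|a| * Re `|x|)); last by ring.
  by apply: ler_wpM2l; [apply: dual_normR_ge0 | apply: lMb].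
- by move=> a b phi; apply: dual_ext => x /=; rewrite rM.
- by move=> a b phi; apply: dual_ext => x /=; rewrite lM.
- by move=> a b phi; apply: dual_ext => x /=; rewrite lrA.
Qed.

Section Derivation.
Variable D : A -> X.
Hypothesis DD : forall a b, D (a + b) = D a + D b.
Hypothesis DZ : forall (k : C) a, D (k *: a) = k *: D a.
Hypothesis Dbounded : exists2 M : R, 0 <= M & forall a, Re `|D a| <= M * Re `|a|.
Hypothesis Dleib : forall a b, D (mulA a b) = r (D a) b + l a (D b).

Lemma dual_derivation_eval :
  dual_derivation mulA dual_lact dual_ract (fun a (phi : dual X) => phi (D a)).
Proof.
split; [|split; [|split; [|split]]].
- move=> a; split => [//|]; split => [//|]; exists (Re `|D a|)%:C => phi.
  rewrite dual_normE -rmorphM normC_ReE lecR mulrC; exact: dual_normR_bound.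
- by move=> a b phi; rewrite DD dual_funD.
- by move=> k a phi; rewrite DZ dual_funZ.
- have [M M0 DM] := Dbounded; exists M%:C => a phi.
  rewrite dual_normE [`|a|]normr_ReE -!rmorphM normC_ReE lecR.
  apply: le_trans (dual_normR_bound _ _) _; rewrite mulrC ler_wpM2r ?dual_normR_ge0 //.
- by move=> a b phi; rewrite Dleib dual_funD.
Qed.

Hypothesis amen : approx_amenable mulA.

Lemma derivation_annihilates n (a : 'I_n -> A) (phi : 'I_n -> dual X) :
  \sum_k (dual_ract (phi k) (a k) - dual_lact (a k) (phi k)) = 0 ->
  \sum_k phi k (D (a k)) = 0.
Proof.
move=> phi_a0.
have [I [le [f [le_dir [f_dual f_approx]]]]] := amen dual_bimodule dual_derivation_eval.
apply: (@eq0_Re_normr_small _ C^o _ (\sum_k dual_normR (phi k))).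
  by rewrite sumr_ge0 // => k _; apply: dual_normR_ge0.
move=> e e0; pose err i k := phi k (D (a k)) -
  (f i (dual_ract (phi k) (a k)) - f i (dual_lact (a k) (phi k))).
have [i0 i0_err] : exists i0, forall i, le i0 i -> forall k, k \in enum 'I_n ->
    Re `|err i k| <= e * dual_normR (phi k).
  apply: directed_eventually_all => [//|k].
  have [i0 i0P] := f_approx (a k) e%:C ltac:(by rewrite ltcR).
  by exists i0 => i /i0P /(_ (phi k)); rewrite dual_normE -rmorphM normC_ReE lecR.
have [fD _] := f_dual i0; have f0 : f i0 0 = 0 by apply: (addIr (f i0 0)); rewrite -fD !add0r.
have fB u v : f i0 (u - v) = f i0 u - f i0 v.
  by apply: (addIr (f i0 v)); rewrite -fD !subrK.
have f_sum0 : \sum_k (f i0 (dual_ract (phi k) (a k)) - f i0 (dual_lact (a k) (phi k))) = 0.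
  transitivity (f i0 (\sum_k (dual_ract (phi k) (a k) - dual_lact (a k) (phi k)))).
    by rewrite (big_morph (f i0) fD f0); apply: eq_bigr => k _; rewrite fB.
  by rewrite phi_a0 f0.
have -> : \sum_k phi k (D (a k)) = \sum_k err i0 k by rewrite /err sumrB f_sum0 subr0.
apply: le_trans (@Re_normr_sum _ C^o _ _ _ _) _; rewrite mulr_sumr ler_sum // => k _.
by apply: i0_err; [exact: le_dir.1 | rewrite mem_enum].
Qed.

Lemma derivation_approx_inner_seq (s : seq A) (e : R) : 0 < e ->
  exists x : X, forall a, a \in s -> Re `|D a - (l a x - r x a)| <= e.
Proof.
move=> e0; apply: contrapT => no_x.
pose n := size s; pose a (k : 'I_n) := nth 0 s k.
pose delta (x : X) : 'I_n -> X := fun k => l (a k) x - r x (a k).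
pose v0 : 'I_n -> X := fun k => D (a k).
have deltaD x y : delta (x + y) = delta x + delta y.
  apply: funext => k; rewrite fctE /delta /=.
  by rewrite (bilinearDr l_bilinear) (bilinearDl r_bilinear) opprD addrACA.
have deltaZ (c : C) x : delta (c *: x) = c *: delta x.
  apply: funext => k; rewrite fctE /delta /=.
  by rewrite (bilinearZr l_bilinear) (bilinearZl r_bilinear) scalerBr.
have far x : e < sum_norm (v0 - delta x).
  have [b sb eb] : exists2 b, b \in s & e < Re `|D b - (l b x - r x b)|.
    apply: contrapT => nb; apply: no_x; exists x => b sb.
    by rewrite leNgt; apply/negP => eb; apply: nb; exists b.
  have bn : (index b s < n)%N by rewrite index_mem.
  apply: lt_le_trans eb _.
  have -> : D b - (l b x - r x b) = (v0 - delta x) (Ordinal bn).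
    by rewrite /v0 /delta /a !fctE /= nth_index.
  exact: le_sum_norm.
have [psi [psiD psiZ psiM psi_delta psi_v0]] :=
  separating_functional (@sum_normD _ _ n) (@sum_normZ _ _ n) deltaD deltaZ e0 far.
have [phi psiE] : exists phi : 'I_n -> dual X, forall v, psi v = \sum_k phi k (v k).
  by apply: (dual_coordinates (M := 2)) => // v; have := psiM v; lra.
have : \sum_k (dual_ract (phi k) (a k) - dual_lact (a k) (phi k)) = 0.
  apply: dual_ext => x; rewrite dualE_sum dualE0 -[RHS](psi_delta x) psiE.
  by apply: eq_bigr => k _; rewrite dualEB /= -dual_funB.
move=> /derivation_annihilates phiD0; move: psi_v0; rewrite psiE phiD0 /=.
by move=> e_eq0; move: e0; rewrite -e_eq0 ltxx.
Qed.

End Derivation.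

End DualModule.

(** * Module derivations *)

Section Essential.
Variable R : realType.
Local Notation C := R[i].
Local Notation Re := (@complex.Re R).

Lemma scalable_of_essential (U A X : normedModType C) (act : U -> A -> A) (D : A -> X) :
  (forall a b, D (a + b) = D a + D b) ->
  (exists2 M : R, 0 <= M & forall a, Re `|D a| <= M * Re `|a|) ->
  (forall (c : C) al b, D (c *: act al b) = c *: D (act al b)) ->
  (forall (a : A) (e : C), 0 < e -> exists (n : nat) (c : 'I_n -> C) (al : 'I_n -> U)
     (b : 'I_n -> A), `|a - \sum_(i < n) c i *: act (al i) (b i)| < e) ->
  forall (k : C) a, D (k *: a) = k *: D a.
Proof.
move=> DD [M M0 DM] D_act dense k a.
have D0 : D 0 = 0 by apply: (addIr (D 0)); rewrite -DD !add0r.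
have DB u v : D (u - v) = D u - D v by apply: (addIr (D v)); rewrite -DD !subrK.
apply/eqP; rewrite -subr_eq0; apply/eqP.
apply: (@eq0_Re_normr_small _ _ _ (M * Re `|k| + Re `|k| * M)).
  by rewrite addr_ge0 ?mulr_ge0 ?Re_normC_ge0.
move=> e e0; have [n [c [al [b]]]] := dense a e%:C ltac:(by rewrite ltcR).
set s := \sum_i _ => as_e.
have Ds : D (k *: s) = k *: D s.
  rewrite scaler_sumr !(big_morph D DD D0) scaler_sumr.
  by apply: eq_bigr => i _; rewrite scalerA D_act D_act scalerA.
have -> : D (k *: a) - k *: D a = D (k *: (a - s)) - k *: D (a - s).
  by rewrite scalerBr !DB Ds scalerBr opprB addrA subrK.
apply: le_trans (Re_normrD _ _) _; rewrite normrN Re_normrZ.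
have as_le : Re `|a - s| <= e by move: as_e; rewrite normr_ReE ltcR => /ltW.
apply: le_trans (lerD (DM _) (ler_wpM2l (Re_normC_ge0 k) (DM _))) _.
rewrite Re_normrZ [leRHS]mulrC; apply: le_trans (ler_wpM2l _ as_le); last first.
  by rewrite addr_ge0 ?mulr_ge0 ?Re_normC_ge0.
by rewrite mulrDl !mulrA [M * _]mulrC lexx.
Qed.

End Essential.

Lemma approx_inner_of_seq (R : realType) (A X : completeNormedModType R[i])
    (l : A -> X -> X) (r : X -> A -> X) (D : A -> X) :
  (forall (s : seq A) (e : R), 0 < e ->
    exists x, forall a, a \in s -> complex.Re `|D a - (l a x - r x a)| <= e) ->
  approx_inner l r D.
Proof.
move=> approx.
pose J := (seq A * nat)%type.
pose le (j1 j2 : J) := {subset j1.1 <= j2.1} /\ (j1.2 <= j2.2)%N.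
have xj (j : J) : exists x, forall a, a \in j.1 ->
    complex.Re `|D a - (l a x - r x a)| <= (j.2.+1%:R)^-1.
  by apply: approx; rewrite invr_gt0 ltr0n.
have [x xP] := choice xj.
exists J, le, x; split.
  split=> [j|]; first by split.
  split=> [j1 j2 j3 [s12 n12] [s23 n23]|].
    by split=> [a /s12 /s23|]; last exact: leq_trans n23.
  split=> [|j1 j2]; first by exists ([::], 0%N).
  exists (j1.1 ++ j2.1, maxn j1.2 j2.2); split; split=> /= [a aj|]; rewrite ?mem_cat ?aj ?orbT //.
  - exact: leq_maxl.
  - exact: leq_maxr.
move=> a e e0; have [N eN] : exists N : nat, (complex.Re e)^-1 < N.+1%:R.
  by exists (Num.Def.trunc (complex.Re e)^-1); apply: truncnS_gt.
exists ([:: a], N) => -[s m] [/= sub Nm].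
rewrite normr_ReE (ger0_ReE (ltW e0)) lecR (le_trans (xP (s, m) a (sub _ (mem_head _ _)))) //=.
rewrite -[complex.Re e]invrK lef_pV2 ?posrE ?ltr0n ?invr_gt0 ?Re_gt0 //.
by rewrite (le_trans (ltW eN)) // ler_nat.
Qed.

Theorem proposition2p2 (R : realType)
    (U : completeNormedModType R[i]) (mulU : U -> U -> U)
    (A : completeNormedModType R[i]) (mulA : A -> A -> A)
    (la : U -> A -> A) (ra : A -> U -> A) :
  banach_algebra mulU ->
  banach_algebra mulA ->
  banach_bimodule mulU la ra ->
  compatible_actions mulA la ra ->
  approx_amenable mulA ->
  (left_essential la \/ right_essential ra) ->
  module_approx_contractible mulU mulA la ra.
Proof.
move=> _ _ UA_bimod _ amen ess X l r lu ru [lr_bimod [UX_bimod _]] _ D.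
move=> [DD [[M DM] [Dleib [Dla Dra]]]]; have Dbounded := Re_bounded DM.
have DZ (k : R[i]) a : D (k *: a) = k *: D a.
  case: ess => [ess|ess].
  - apply: (scalable_of_essential DD Dbounded _ ess) => c al b.
    by rewrite -(bilinearZl UA_bimod.1.1) !Dla (bilinearZl UX_bimod.1.1).
  - apply: (scalable_of_essential (act := fun al b => ra b al) DD Dbounded _ ess) => c al b.
    by rewrite -(bilinearZr UA_bimod.2.1.1) !Dra (bilinearZr UX_bimod.2.1.1).
apply: approx_inner_of_seq => s e.
exact: (derivation_approx_inner_seq lr_bimod DD DZ Dbounded Dleib amen).
Qed.
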